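(* For $n\ge1$ let $$\mathrm{Luc}_n(x)=\sum_{m=0}^{\lfloor n/2\rfloor}q^{\binom{m}{2}}\begin{bmatrix} n-m\\ m\end{bmatrix}_q\frac{[n]_q}{[n-m]_q}x^{n-2m}.$$ Then for every $n\ge1$, $$\det\left(\begin{bmatrix} 2i\\ i-j\end{bmatrix}_q x^2+\begin{bmatrix} 2i+2\\ i+1-j\end{bmatrix}_q\right)_{i,j=0}^{n-1}=\mathrm{Luc}_{2n}(x),$$ $$x\det\left(\begin{bmatrix} 2i+1\\ i-j\end{bmatrix}_q x^2+\begin{bmatrix} 2i+3\\ i+1-j\end{bmatrix}_q\right)_{i,j=0}^{n-1}=\mathrm{Luc}_{2n+1}(x).$$
   Context: Here $q$ is an indeterminate, $[m]_q=\frac{1-q^m}{1-q}$, and for integers $m\ge0$ and $j$ the $q$-binomial coefficient is $\begin{bmatrix} m\\ j\end{bmatrix}_q=\frac{(1-q^m)(1-q^{m-1})\cdots(1-q^{m-j+1})}{(1-q)(1-q^2)\cdots(1-q^j)}$ for $0\le j\le m$ and $0$ otherwise. *)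

From HB Require Import structures.
From mathcomp Require Import all_boot all_order all_algebra.
Set Implicit Arguments. Unset Strict Implicit. Unset Printing Implicit Defensive.
Import Order.TTheory GRing.Theory Num.Theory.
Local Open Scope ring_scope.

Definition K : fieldType := {fraction {poly int}}.

Definition qq : K := FracField.tofrac ('X : {poly int}).

Definition qint (q : K) (m : nat) : K := (1 - q ^+ m) / (1 - q).

Definition qbin (q : K) (m : nat) (j : int) : K :=
  match j with
  | Posz k => if (k <= m)%N then
                (\prod_(l < k) (1 - q ^+ (m - l)%N)) /
                (\prod_(l < k) (1 - q ^+ l.+1))
              else 0
  | Negz _ => 0
  end.

Definition Luc (n : nat) : {poly K} :=
  \sum_(m < (n./2).+1)
     (qq ^+ 'C(m, 2) * qbin qq (n - m) m * qint qq n / qint qq (n - m)) *: 'X^(n - 2 * m).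

Definition matA (n : nat) : 'M[{poly K}]_n :=
  \matrix_(i < n, j < n)
     ((qbin qq (2 * i) (i%:Z - j%:Z))%:P * 'X^2
      + (qbin qq (2 * i + 2) (i%:Z + 1 - j%:Z))%:P).

Definition matB (n : nat) : 'M[{poly K}]_n :=
  \matrix_(i < n, j < n)
     ((qbin qq (2 * i + 1) (i%:Z - j%:Z))%:P * 'X^2
      + (qbin qq (2 * i + 3) (i%:Z + 1 - j%:Z))%:P).

From HB Require Import structures.
From mathcomp Require Import all_boot all_order all_algebra zify ring.
Import GRing.Theory.
Local Open Scope ring_scope.

(* Both matrices are lower Hessenberg with unit superdiagonal.  For such a
   matrix (a_ij), applying the adjugate to its product with the vector
   ((-1)^k d_k) gives d_0 * det = d_n, as soon as d satisfies the row
   recurrences sum_(k <= i+1) (-1)^k a_ik d_k = 0.  For d_k = Luc_(2k+e),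
   e = 0, 1, these recurrences follow from the inversion formula
     x^N = sum_j (-1)^j [N choose j]_q Luc_(N-2j)(x)      (with Luc_0 = 1),
   whose coefficient of x^(N-2m), m > 0, is a telescoping sum. *)

Section HessenbergDeterminant.

Variables (R : comNzRingType) (a : nat -> nat -> R) (d : nat -> R).
Hypothesis a_hessenberg : forall i j, (i.+1 < j)%N -> a i j = 0.
Hypothesis a_superdiag : forall i, a i i.+1 = 1.
Hypothesis d_recurrence : forall i, \sum_(k < i.+2) (-1) ^+ k * a i k * d k = 0.

Lemma hessenberg_cofactor n :
  cofactor (\matrix_(i < n.+1, j < n.+1) a i j) ord_max ord0 = (-1) ^+ n.
Proof.
rewrite /cofactor addn0 det_trig; last first.
  by apply/is_trig_mxP => i j hij; rewrite !mxE lift_max lift0 a_hessenberg.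
by rewrite big1 ?mulr1 // => i _; rewrite !mxE lift_max lift0 a_superdiag.
Qed.

Lemma hessenberg_mul_signed n :
  (\matrix_(i < n.+1, j < n.+1) a i j) *m \col_k ((-1) ^+ k * d k)
  = \col_i ((i == ord_max)%:R * ((-1) ^+ n * d n.+1)).
Proof.
apply/matrixP => i j; rewrite !mxE.
under eq_bigr => k _ do rewrite !mxE mulrCA mulrA.
have full_sum0 : \sum_(k < n.+2) (-1) ^+ k * a i k * d k = 0.
  rewrite -[RHS](d_recurrence i).
  rewrite (@big_ord_widen _ _ _ i.+2 n.+2 (fun k => (-1) ^+ k * a i k * d k));
    last exact: ltn_ord i.
  rewrite [RHS]big_mkcond; apply: eq_bigr => k _; case: ltnP => // ik.
  by rewrite a_hessenberg ?mulr0 ?mul0r.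
move: full_sum0; rewrite big_ord_recr /= => /eqP; rewrite addr_eq0 => /eqP ->.
have [-> | /negPf ne_in] := eqVneq i ord_max.
  by rewrite a_superdiag mulr1 mul1r exprS mulN1r mulNr opprK.
rewrite a_hessenberg ?mulr0 ?mul0r ?oppr0 //.
by have := ltn_ord i; move: ne_in; rewrite -val_eqE /=; lia.
Qed.

Lemma hessenberg_det_recurrence n :
  d 0 * \det (\matrix_(i < n.+1, j < n.+1) a i j) = d n.+1.
Proof.
set A := \matrix_(i < n.+1, j < n.+1) a i j.
have := congr1 (fun M : 'cV_n.+1 => M ord0 ord0)
               (mulmxA (\adj A) A (\col_k ((-1) ^+ k * d k))).
rewrite /= mul_adj_mx mul_scalar_mx hessenberg_mul_signed !mxE (bigD1 ord_max) //=.
rewrite big1 => [|k /negPf nk]; last by rewrite !mxE nk mul0r mulr0.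
rewrite !mxE eqxx hessenberg_cofactor mul1r addr0 mulrA -exprD expr0 mul1r.
by rewrite -signr_odd addnn odd_double mul1r mulrC => <-.
Qed.

End HessenbergDeterminant.

Lemma onesub_qX_neq0 i : (0 < i)%N -> 1 - qq ^+ i != 0.
Proof.
move=> i_gt0; rewrite /qq -rmorphXn -(rmorph1 (@FracField.tofrac _)) -rmorphB.
rewrite tofrac_eq0 subr_eq0; apply/eqP => /(congr1 (fun p : {poly int} => size p)).
by rewrite size_poly1 size_polyXn; lia.
Qed.

Lemma onesub_q_neq0 : 1 - qq != 0.
Proof. by rewrite -[qq]expr1 onesub_qX_neq0. Qed.

Lemma qint_ratio x y : qint qq x / qint qq y = (1 - qq ^+ x) / (1 - qq ^+ y).
Proof. by rewrite /qint invf_div mulrA divfK ?onesub_q_neq0. Qed.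

Definition qbinom (n k : nat) : K := qbin qq n k%:Z.

Lemma qbinom0 n : qbinom n 0 = 1.
Proof. by rewrite /qbinom /qbin /= !big_ord0 divr1. Qed.

Lemma qbinomSS n k :
  qbinom n.+1 k.+1 * (1 - qq ^+ k.+1) = qbinom n k * (1 - qq ^+ n.+1).
Proof.
rewrite /qbinom /qbin ltnS; case: leqP => k_le_n; last by rewrite !mul0r.
rewrite big_ord_recl big_ord_recr /= subn0.
under eq_bigr => l _ do rewrite /bump leq0n add1n subSS.
by rewrite invfM mulrA mulfVK ?onesub_qX_neq0 // -mulrA mulrC.
Qed.

Lemma qbinomS n k : (k <= n)%N ->
  qbinom n.+1 k * (1 - qq ^+ (n.+1 - k)) = qbinom n k * (1 - qq ^+ n.+1).
Proof.
move=> k_le_n; rewrite /qbinom /qbin k_le_n (leqW k_le_n).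
have num_rec : \prod_(l < k) (1 - qq ^+ (n.+1 - l)) * (1 - qq ^+ (n.+1 - k)) =
               (1 - qq ^+ n.+1) * \prod_(l < k) (1 - qq ^+ (n - l)).
  rewrite -(big_ord_recr k (fun l : 'I_k.+1 => 1 - qq ^+ (n.+1 - l))) big_ord_recl.
  by rewrite subn0; congr (_ * _); apply: eq_bigr => l _; rewrite /bump leq0n add1n subSS.
by rewrite mulrAC num_rec -mulrA mulrC.
Qed.

(* With A = q^(a+1), S = q^s, R = q^r and m = a+1+s, this is the q-analogue of
   (m+s+r) s + (a+1)(s+r) = m (2s+r).  It is stated over an arbitrary field
   because [field] does not terminate on the concrete field K. *)
Lemma q_telescoping_identity (F : fieldType) (A S R : F) :
  1 - A * S != 0 -> 1 - S * R != 0 -> 1 - A * S * (A * S) * R != 0 ->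
  (1 - S * S * R) / (1 - S * R) =
  (1 - A * S * (A * S) * R) / (1 - A * S) *
  ((1 - A * S * S * R) / (1 - A * S * (A * S) * R) * ((1 - S) / (1 - S * R))
   + S * ((1 - A) / (1 - A * S * (A * S) * R))).
Proof. by move=> nz_AS nz_SR nz_N; field; rewrite nz_AS nz_SR nz_N. Qed.

(* The formula of the paper is undefined for M = 0; the value Luc_0 = 1 chosen
   here is the one for which the inversion formula [lucas_expansion] holds. *)
Definition lucas_coef (M m : nat) : K :=
  if M == 0%N then (m == 0%N)%:R
  else qq ^+ 'C(m, 2) * qbinom (M - m) m * ((1 - qq ^+ M) / (1 - qq ^+ (M - m))).

Lemma lucas_coef0 M : lucas_coef M 0 = 1.
Proof.
rewrite /lucas_coef; case: eqP => [_|/eqP M_neq0]; first by rewrite eqxx.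
by rewrite expr0 mul1r qbinom0 mul1r subn0 divff ?onesub_qX_neq0 ?lt0n.
Qed.

Definition expansion_coef (N m j : nat) : K :=
  (-1) ^+ j * qbinom N j * lucas_coef (N - 2 * j) (m - j).

(* The telescoping certificate: the partial sum of [expansion_coef N m j] over
   j <= k equals [N]_q / [m]_q * expansion_partial N m k (0 for k = m). *)
Definition expansion_partial (N m k : nat) : K :=
  if (k < m)%N then
    (-1) ^+ k * qq ^+ 'C(m - k, 2) * qbinom N.-1 k * qbinom (N - m - k).-1 (m - k).-1
  else 0.

Lemma expansion_coef0 N m : (0 < m)%N -> (2 * m <= N)%N ->
  expansion_coef N m 0 = (1 - qq ^+ N) / (1 - qq ^+ m) * expansion_partial N m 0.
Proof.
move=> m_gt0 le_2m_N.
rewrite /expansion_coef /expansion_partial /lucas_coef m_gt0 muln0 !subn0 !qbinom0.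
rewrite ifF; last by apply/eqP; lia.
have := qbinomSS (N - m).-1 m.-1; rewrite !prednK ?subn_gt0; try lia.
have nz_m := @onesub_qX_neq0 m m_gt0.
have nz_Nm : 1 - qq ^+ (N - m) != 0 by rewrite onesub_qX_neq0 //; lia.
rewrite expr0 !mul1r => rel.
set B := qbinom (N - m) m; set B' := qbinom (N - m).-1 m.-1.
transitivity (qq ^+ 'C(m, 2) * (1 - qq ^+ N) * (B / (1 - qq ^+ (N - m)))); first by ring.
transitivity (qq ^+ 'C(m, 2) * (1 - qq ^+ N) * (B' / (1 - qq ^+ m))); last by ring.
by congr (_ * _); apply/eqP; rewrite (eqr_div _ _ nz_Nm nz_m) rel.
Qed.

Lemma expansion_coef_last N a : (2 * a.+1 <= N)%N ->
  expansion_coef N a.+1 a.+1 =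
  (1 - qq ^+ N) / (1 - qq ^+ a.+1)
  * (expansion_partial N a.+1 a.+1 - expansion_partial N a.+1 a).
Proof.
move=> le_2a_N; rewrite /expansion_coef /expansion_partial ltnn ltnSn subnn subSn // subnn.
rewrite lucas_coef0 bin_small // expr0 !qbinom0 !mulr1.
have B1_rec := qbinomSS N.-1 a; rewrite prednK in B1_rec; last by lia.
have -> : qbinom N a.+1 = qbinom N.-1 a * ((1 - qq ^+ N) / (1 - qq ^+ a.+1)).
  by rewrite mulrA -B1_rec (mulfK (@onesub_qX_neq0 a.+1 (ltn0Sn a))).
by rewrite exprS mulN1r; ring.
Qed.

Lemma expansion_coef_step N m a : (a.+1 < m)%N -> (2 * m <= N)%N ->
  expansion_coef N m a.+1 =
  (1 - qq ^+ N) / (1 - qq ^+ m) * (expansion_partial N m a.+1 - expansion_partial N m a).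
Proof.
move=> a1_lt_m le_2m_N; rewrite /expansion_coef /expansion_partial a1_lt_m (ltnW a1_lt_m).
have [s def_m] : exists s, m = (a.+1 + s.+1)%N by exists (m - a.+2)%N; lia.
have [r def_N] : exists r, N = (m + m + r)%N by exists (N - 2 * m)%N; lia.
have -> : (N - 2 * a.+1 = s.+1 + s.+1 + r)%N by lia.
have -> : (m - a.+1 = s.+1)%N by lia.
have -> : (m - a = s.+2)%N by lia.
have -> : (N - m - a = (s.+1 + r).+1)%N by lia.
have -> : (N - m - a.+1 = s.+1 + r)%N by lia.
rewrite /lucas_coef (_ : (s.+1 + s.+1 + r == 0)%N = false) //.
have -> : (s.+1 + s.+1 + r - s.+1 = s.+1 + r)%N by lia.
have -> : (s.+1 + r).-1 = (s + r)%N by lia.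
rewrite !succnK exprS mulN1r.
set A := qq ^+ a.+1; set S := qq ^+ s.+1; set R := qq ^+ r.
have eN : qq ^+ N = A * S * (A * S) * R by rewrite def_N def_m !exprD.
have eNa : qq ^+ (N - a.+1) = A * S * S * R.
  by rewrite (_ : N - a.+1 = a.+1 + s.+1 + s.+1 + r)%N ?exprD //; lia.
have em : qq ^+ m = A * S by rewrite def_m exprD.
have eSR : qq ^+ (s.+1 + r) = S * R by rewrite exprD.
have eSSR : qq ^+ (s.+1 + s.+1 + r) = S * S * R by rewrite !exprD.
have eC : qq ^+ 'C(s.+2, 2) = qq ^+ 'C(s.+1, 2) * S by rewrite binS bin1 exprD.
have nz_N : 1 - A * S * (A * S) * R != 0 by rewrite -eN onesub_qX_neq0 //; lia.
have nz_m : 1 - A * S != 0 by rewrite -em onesub_qX_neq0 //; lia.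
have nz_SR : 1 - S * R != 0 by rewrite -eSR onesub_qX_neq0.
rewrite eN em eSSR eSR eC (@q_telescoping_identity _ A S R nz_m nz_SR nz_N).
have B0_rec : qbinom N a.+1 * (1 - A * S * S * R) = qbinom N.-1 a.+1 * (1 - A * S * (A * S) * R).
  by rewrite -eN -eNa; have := @qbinomS N.-1 a.+1; rewrite prednK; [apply; lia | lia].
have B1_rec : qbinom N a.+1 * (1 - A) = qbinom N.-1 a * (1 - A * S * (A * S) * R).
  by rewrite -eN; have := qbinomSS N.-1 a; rewrite prednK; [apply | lia].
have -> : qbinom N.-1 a.+1 =
          qbinom N a.+1 * (1 - A * S * S * R) / (1 - A * S * (A * S) * R).
  by rewrite B0_rec (mulfK nz_N).
have -> : qbinom N.-1 a = qbinom N a.+1 * (1 - A) / (1 - A * S * (A * S) * R).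
  by rewrite B1_rec (mulfK nz_N).
have -> : qbinom (s + r) s = qbinom (s.+1 + r) s.+1 * (1 - S) / (1 - S * R).
  by rewrite -eSR addSn qbinomSS -addSn eSR (mulfK nz_SR).
ring.
Qed.

Lemma expansion_coefS N m a : (a < m)%N -> (2 * m <= N)%N ->
  expansion_coef N m a.+1 =
  (1 - qq ^+ N) / (1 - qq ^+ m) * (expansion_partial N m a.+1 - expansion_partial N m a).
Proof.
rewrite leq_eqVlt => /orP[/eqP <- | ]; [exact: expansion_coef_last | exact: expansion_coef_step].
Qed.

Lemma sum_expansion_coef N m : (0 < m)%N -> (2 * m <= N)%N ->
  \sum_(j < m.+1) expansion_coef N m j = 0.
Proof.
move=> m_gt0 le_2m_N.
have partial_sum k : (k <= m)%N -> \sum_(j < k.+1) expansion_coef N m j =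
    (1 - qq ^+ N) / (1 - qq ^+ m) * expansion_partial N m k.
  elim: k => [|k IHk] lt_km.
    by rewrite big_ord1 (@expansion_coef0 N m m_gt0 le_2m_N).
  rewrite big_ord_recr /= (IHk (ltnW lt_km)) (@expansion_coefS N m k lt_km le_2m_N).
  by rewrite mulrBr addrC subrK.
by rewrite (partial_sum m (leqnn m)) /expansion_partial ltnn mulr0.
Qed.

Definition lucas (M : nat) : {poly K} :=
  \sum_(m < M./2.+1) lucas_coef M m *: 'X^(M - 2 * m).

Lemma lucas_Luc M : (0 < M)%N -> lucas M = Luc M.
Proof.
case: M => // M _; apply: eq_bigr => m _.
by rewrite /lucas_coef -[_ * qint qq _ / _]mulrA qint_ratio.
Qed.

Lemma lucas0 : lucas 0 = 1.
Proof. by rewrite /lucas big_ord1 /lucas_coef scale1r expr0. Qed.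

Lemma lucas1 : lucas 1 = 'X.
Proof. by rewrite /lucas big_ord1 lucas_coef0 scale1r expr1. Qed.

Lemma sum_triangle (V : nmodType) (f : nat -> nat -> V) n :
  \sum_(j < n.+1) \sum_(m < (n - j).+1) f j m =
  \sum_(t < n.+1) \sum_(j < t.+1) f j (t - j)%N.
Proof.
elim: n => [|n IHn]; first by rewrite !big_ord1.
rewrite big_ord_recr [RHS]big_ord_recr [X in _ = _ + X]big_ord_recr /= -IHn subnn big_ord1.
rewrite (eq_bigr (fun j : 'I_n.+1 => \sum_(m < (n - j).+1) f j m + f j (n.+1 - j)%N)).
  by rewrite big_split addrA.
move=> j _; have le_jn : (j <= n)%N by rewrite -ltnS.
by rewrite subSn // big_ord_recr -subSn.
Qed.

Lemma lucas_expansion n e : (e <= 1)%N ->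
  \sum_(j < n.+1) ((-1) ^+ j * qbinom (n + n + e) j) *: lucas (n + n + e - 2 * j)
  = 'X^(n + n + e).
Proof.
move=> le_e1; set N := (n + n + e)%N.
have half_N j : (j <= n)%N -> (N - 2 * j)./2 = (n - j)%N.
  move=> le_jn; rewrite (_ : N - 2 * j = (n - j).*2 + e)%N; last by rewrite -addnn /N; lia.
  by case: e le_e1 {N} => [|[|//]] _; rewrite ?addn0 ?doubleK // addn1 /= uphalf_double.
have split_term (j : 'I_n.+1) : ((-1) ^+ j * qbinom N j) *: lucas (N - 2 * j) =
    \sum_(m < (n - j).+1) ((-1) ^+ j * qbinom N j * lucas_coef (N - 2 * j) m)
                             *: 'X^(N - 2 * (j + m)).
  rewrite /lucas (half_N j (ltnSE (ltn_ord j))) scaler_sumr.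
  by apply: eq_bigr => m _; rewrite scalerA; congr (_ *: 'X^_); lia.
rewrite (eq_bigr _ (fun j _ => split_term j)).
rewrite (@sum_triangle _ (fun j m => ((-1) ^+ j * qbinom N j * lucas_coef (N - 2 * j) m)
                                    *: 'X^(N - 2 * (j + m)))).
rewrite (eq_bigr (fun t : 'I_n.+1 =>
                   (\sum_(j < t.+1) expansion_coef N t j) *: 'X^(N - 2 * t))); last first.
  move=> t _; rewrite scaler_suml; apply: eq_bigr => j _.
  by rewrite /expansion_coef; congr (_ *: 'X^_); have := ltn_ord j; lia.
rewrite big_ord_recl [X in _ + X]big1 => [|t _]; last first.
  by rewrite sum_expansion_coef ?scale0r // lift0 /N; have := ltn_ord t; lia.
rewrite big_ord1 addr0 muln0 subn0 /expansion_coef expr0 qbinom0 lucas_coef0.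
by rewrite !mul1r scale1r.
Qed.

Lemma qbin_sub_lt m (i j : nat) : (i < j)%N -> qbin qq m (i%:Z - j%:Z) = 0.
Proof.
by move=> lt_ij; rewrite (_ : i%:Z - j%:Z = Negz (j - i).-1) // NegzE prednK; lia.
Qed.

Lemma qbin_sub m (i j : nat) : (j <= i)%N -> qbin qq m (i%:Z - j%:Z) = qbinom m (i - j).
Proof. by move=> le_ji; rewrite /qbinom; congr qbin; lia. Qed.

Lemma sum_signed_qbin_lucas e M : (e <= 1)%N ->
  \sum_(k < M.+1) (-1) ^+ k * (qbin qq (M + M + e) (M%:Z - k%:Z))%:P * lucas (k + k + e)
  = (-1) ^+ M * 'X^(M + M + e).
Proof.
move=> le_e1; rewrite -(@lucas_expansion M e le_e1) big_distrr /=.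
rewrite (reindex_inj rev_ord_inj) /=.
apply: eq_bigr => k _; have le_kM : (k <= M)%N by rewrite -ltnS.
rewrite subSS qbin_sub ?leq_subr // subKn //.
rewrite (_ : M - k + (M - k) + e = M + M + e - 2 * k)%N; last by lia.
rewrite -signr_odd oddB // signr_addb !signr_odd.
by rewrite -mul_polyC rmorphM rmorphXn rmorphN1 !mulrA.
Qed.

Definition lucas_entry (e i j : nat) : {poly K} :=
  (qbin qq (i + i + e) (i%:Z - j%:Z))%:P * 'X^2
  + (qbin qq (i.+1 + i.+1 + e) (i.+1%:Z - j%:Z))%:P.

Lemma det_lucas_mx e n : (e <= 1)%N ->
  lucas e * \det (\matrix_(i < n.+1, j < n.+1) lucas_entry e i j)
  = lucas (n.+1 + n.+1 + e).
Proof.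
move=> le_e1.
apply: (@hessenberg_det_recurrence _ (lucas_entry e) (fun k => lucas (k + k + e))).
- by move=> i j lt_i1j; rewrite /lucas_entry !qbin_sub_lt ?polyC0 ?mul0r ?addr0 //; lia.
- move=> i; rewrite /lucas_entry qbin_sub_lt // qbin_sub // subnn.
  by rewrite qbinom0 polyC0 mul0r add0r.
move=> i; have split_entry (s A B L : {poly K}) :
    s * (A * 'X^2 + B) * L = 'X^2 * (s * A * L) + s * B * L by ring.
under eq_bigr => k _ do rewrite /lucas_entry split_entry.
rewrite big_split -big_distrr /= [X in 'X^2 * X]big_ord_recr /=.
rewrite (@qbin_sub_lt _ i i.+1 (ltnSn i)) polyC0 mulr0 mul0r addr0.
rewrite !(@sum_signed_qbin_lucas e _ le_e1) mulrCA -exprD.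
by rewrite (_ : 2 + (i + i + e) = i.+1 + i.+1 + e)%N ?exprS ?mulN1r ?mulNr ?addrN //; lia.
Qed.

Lemma matA_lucas n : matA n = \matrix_(i < n, j < n) lucas_entry 0 i j.
Proof.
rewrite /matA; apply: eq_mx => i j; rewrite /lucas_entry.
have -> : (2 * i + 2 = i.+1 + i.+1 + 0)%N by lia.
have -> : (2 * i = i + i + 0)%N by lia.
by have -> : i%:Z + 1 = i.+1%:Z by lia.
Qed.

Lemma matB_lucas n : matB n = \matrix_(i < n, j < n) lucas_entry 1 i j.
Proof.
rewrite /matB; apply: eq_mx => i j; rewrite /lucas_entry.
have -> : (2 * i + 1 = i + i + 1)%N by lia.
have -> : (2 * i + 3 = i.+1 + i.+1 + 1)%N by lia.
by have -> : i%:Z + 1 = i.+1%:Z by lia.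
Qed.

Theorem proposition7 (n : nat) (hn : (1 <= n)%N) :
  \det (matA n) = Luc (2 * n) /\ 'X * \det (matB n) = Luc (2 * n + 1).
Proof.
case: n hn => [//|n] _; split.
  have := @det_lucas_mx 0 n (leq0n 1); rewrite lucas0 mul1r -matA_lucas => ->.
  by rewrite lucas_Luc // (_ : 2 * n.+1 = n.+1 + n.+1 + 0)%N; last lia.
have := @det_lucas_mx 1 n (leqnn 1); rewrite lucas1 -matB_lucas => ->.
by rewrite lucas_Luc // (_ : 2 * n.+1 + 1 = n.+1 + n.+1 + 1)%N; last lia.
Qed.
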